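(* Let $S$ be a semigroup, $I,J$ nonempty index sets, and $P=(p_{ji})_{j\in J,i\in I}$ a $J\times I$ matrix with entries in $S$. If the Rees matrix semigroup $\mathcal{M}[S;I,J;P]$ is DSC, then $|I|=|J|=1$ and $S$ is DSC.
   Context: The Rees matrix semigroup $\mathcal{M}[S;I,J;P]$ is the set $I\times S\times J$ with multiplication $(i,g,j)(k,h,l)=(i,g\,p_{jk}\,h,l)$. For a semigroup $T$, a diagonal subsemigroup of $T\times T$ is a subsemigroup containing $\{(t,t)\colon t\in T\}$; a congruence on $T$ is a diagonal subsemigroup that is symmetric and transitive; $T$ is DSC if every diagonal subsemigroup of $T\times T$ is a congruence on $T$. *)

Definition associative {T : Type} (op : T -> T -> T) : Prop :=
  forall x y z, op x (op y z) = op (op x y) z.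

Definition diagonal_subsemigroup {T : Type} (op : T -> T -> T)
    (rho : T -> T -> Prop) : Prop :=
  (forall a b c d, rho a b -> rho c d -> rho (op a c) (op b d)) /\
  (forall t, rho t t).

Definition congruence {T : Type} (op : T -> T -> T) (rho : T -> T -> Prop)
    : Prop :=
  diagonal_subsemigroup op rho /\
  (forall a b, rho a b -> rho b a) /\
  (forall a b c, rho a b -> rho b c -> rho a c).

Definition DSC {T : Type} (op : T -> T -> T) : Prop :=
  forall rho : T -> T -> Prop, diagonal_subsemigroup op rho -> congruence op rho.

Definition rees_mul {S I J : Type} (mul : S -> S -> S) (P : J -> I -> S)
    (x y : I * S * J) : I * S * J :=
  match x, y with
  | (i, g, j), (k, h, l) => (i, mul (mul g (P j k)) h, l)
  end.

Definition singleton_type (X : Type) : Prop := exists x : X, forall y : X, y = x.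


Set Implicit Arguments.

(* In a DSC semigroup, a relation that only looks at a "left-absorbing"
   invariant f (one with f (x y) = f x) is a diagonal subsemigroup however
   asymmetric it is; forcing it to be symmetric makes f constant. The first
   and last index of a Rees matrix semigroup are such invariants (the last one
   for the opposite product), so both index sets are trivial. A diagonal
   subsemigroup rho of S lifts to the Rees matrix semigroup by comparing
   entries with rho and indices with equality, and symmetry and transitivity
   of the lift restrict back to rho. *)

Lemma diagonal_subsemigroup_flip (T : Type) (op : T -> T -> T)
    (rho : T -> T -> Prop) :
  diagonal_subsemigroup op rho ->
  diagonal_subsemigroup (fun x y => op y x) rho.
Proof.
  intros [Hmul Hdiag]; split; [|exact Hdiag].
  intros a b c d Hab Hcd; exact (Hmul c d a b Hcd Hab).
Qed.

Lemma DSC_flip (T : Type) (op : T -> T -> T) :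
  DSC op -> DSC (fun x y => op y x).
Proof.
  intros Hdsc rho Hrho.
  destruct (Hdsc rho (diagonal_subsemigroup_flip Hrho)) as [_ Hequiv].
  split; [exact Hrho | exact Hequiv].
Qed.

Lemma DSC_left_invariant_const (T X : Type) (op : T -> T -> T) (f : T -> X) :
  DSC op -> (forall x y, f (op x y) = f x) -> forall x y, f x = f y.
Proof.
  intros Hdsc Hf x y.
  set (rho := fun u v => f u = f v \/ (f u = f x /\ f v = f y)).
  assert (Hrho : diagonal_subsemigroup op rho).
  { split.
    - intros a b c d Hab _; unfold rho; rewrite !Hf; exact Hab.
    - intros t; left; reflexivity. }
  destruct (Hdsc rho Hrho) as [_ [Hsym _]].
  destruct (Hsym x y (or_intror (conj eq_refl eq_refl))) as [E | [E _]];
    symmetry; exact E.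
Qed.

Lemma DSC_right_invariant_const (T X : Type) (op : T -> T -> T) (f : T -> X) :
  DSC op -> (forall x y, f (op x y) = f y) -> forall x y, f x = f y.
Proof.
  intros Hdsc Hf.
  exact (DSC_left_invariant_const f (DSC_flip Hdsc) (fun x y => Hf y x)).
Qed.

Lemma singleton_type_of_const (X : Type) (x0 : X) :
  (forall x y : X, x = y) -> singleton_type X.
Proof. intros Hconst; exists x0; intros y; apply Hconst. Qed.

Section ReesMatrix.

Variables (S I J : Type) (mul : S -> S -> S) (P : J -> I -> S).

Notation rees := (rees_mul mul P).

Lemma rees_mul_fst (x y : I * S * J) : fst (fst (rees x y)) = fst (fst x).
Proof. destruct x as [[i g] j], y as [[k h] l]; reflexivity. Qed.

Lemma rees_mul_snd (x y : I * S * J) : snd (rees x y) = snd y.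
Proof. destruct x as [[i g] j], y as [[k h] l]; reflexivity. Qed.

Definition rees_lift (rho : S -> S -> Prop) (x y : I * S * J) : Prop :=
  fst (fst x) = fst (fst y) /\ snd x = snd y /\ rho (snd (fst x)) (snd (fst y)).

Lemma rees_lift_diagonal (rho : S -> S -> Prop) :
  diagonal_subsemigroup mul rho -> diagonal_subsemigroup rees (rees_lift rho).
Proof.
  intros [Hmul Hdiag]; split.
  - intros [[i g] j] [[i' g'] j'] [[k h] l] [[k' h'] l']
      [Ei [Ej Hg]] [Ek [El Hh]]; simpl in *; subst.
    repeat split; apply Hmul; [apply Hmul|]; auto.
  - intros [[i g] j]; repeat split; apply Hdiag.
Qed.

Lemma rees_DSC_entries (i0 : I) (j0 : J) : DSC rees -> DSC mul.
Proof.
  intros Hdsc rho Hrho.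
  destruct (Hdsc _ (rees_lift_diagonal Hrho)) as [_ [Hsym Htrans]].
  assert (Hemb : forall a b, rees_lift rho (i0, a, j0) (i0, b, j0) <-> rho a b).
  { intros a b; unfold rees_lift; simpl; tauto. }
  split; [exact Hrho | split].
  - intros a b Hab.
    apply (proj1 (Hemb b a)), Hsym, (proj2 (Hemb a b)), Hab.
  - intros a b c Hab Hbc.
    apply (proj1 (Hemb a c)), Htrans with (i0, b, j0).
    + exact (proj2 (Hemb a b) Hab).
    + exact (proj2 (Hemb b c) Hbc).
Qed.

End ReesMatrix.

Theorem mainTheorem4 (S I J : Type) (mul : S -> S -> S)
    (Hassoc : associative mul) (s0 : S) (i0 : I) (j0 : J) (P : J -> I -> S) :
  DSC (rees_mul mul P) ->
  singleton_type I /\ singleton_type J /\ DSC mul.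
Proof.
  intros Hdsc; split; [|split].
  - apply (singleton_type_of_const i0); intros i k.
    exact (DSC_left_invariant_const _ Hdsc (rees_mul_fst mul P)
             (i, s0, j0) (k, s0, j0)).
  - apply (singleton_type_of_const j0); intros j l.
    exact (DSC_right_invariant_const _ Hdsc (rees_mul_snd mul P)
             (i0, s0, j) (i0, s0, l)).
  - exact (rees_DSC_entries i0 j0 Hdsc).
Qed.
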